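(* Let $p$ and $q$ be distinct positive integers. Then for every integer $n\ge p$, the number of compositions of $n-p$ all of whose parts are equal to $p$ or $q$ equals the number of compositions of $n$ all of whose parts are of the form $p+qi$ with $i\in\mathbb N=\{0,1,2,\dots\}$.
   Context: A composition of an integer $n\ge 0$ is a finite sequence $(a_1,\dots,a_k)$ of positive integers (the parts) with sum $n$; the empty sequence is the unique composition of $0$. *)

From mathcomp Require Import all_boot.
Set Implicit Arguments. Unset Strict Implicit. Unset Printing Implicit Defensive.

Definition is_composition (n : nat) (s : seq nat) : bool :=
  all (fun a => 0 < a) s && (sumn s == n).

Fixpoint seqs_bounded (l m : nat) : seq (seq nat) :=
  if l is l'.+1 then
    flatten [seq [seq a :: t | t <- seqs_bounded l' m] | a <- iota 0 m.+1]
  else [:: [::]].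

(* A finite universe containing every composition of n exactly once
   (every composition of n has length <= n and parts <= n). *)
Definition comp_universe (n : nat) : seq (seq nat) :=
  flatten [seq seqs_bounded l n | l <- iota 0 n.+1].

Definition num_compositions (P : pred nat) (n : nat) : nat :=
  count (fun s => is_composition n s && all P s) (comp_universe n).

From mathcomp Require Import all_boot zify.

(* Write f m for the number of compositions of m into parts p
   and q, g n for the number of compositions of n into parts p + q*i, and
   N_P m for the number of NONEMPTY compositions of m with parts in P,
   counted by their first part: N_P m = sum_{1 <= a <= m, P a} #P(m - a), so
   that #P m = [m = 0] + N_P m.
   - For parts {p, q}:  N m = [p <= m] f (m - p) + [q <= m] f (m - q).
   - For parts p + qN:  the first part is either p, or it is >= p + q and
     lowering it by q gives a nonempty composition of m - q, so
     N m = [p <= m] g (m - p) + N (m - q).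
   A strong induction on m then yields N_{p+qN} m = [p <= m] f (m - p), and
   for n >= p > 0 this gives g n = N_{p+qN} n = f (n - p). *)

Lemma uniq_flatten_map (S T : eqType) (s : seq S) (A : S -> seq T) :
  uniq s -> (forall x, uniq (A x)) ->
  (forall x y z, z \in A x -> z \in A y -> x = y) ->
  uniq (flatten (map A s)).
Proof.
move=> Us UA disjA; elim: s Us => //= x s IH /andP[xs Us].
rewrite cat_uniq UA IH // andbT; apply/hasP => -[z /flatten_mapP[y ys zy] zx].
by move: xs; rewrite (disjA _ _ _ zx zy) ys.
Qed.

Lemma mem_seqs_bounded l m s :
  (s \in seqs_bounded l m) = (size s == l) && all (fun a => a <= m) s.
Proof.
elim: l s => [|l IH] [|a s]; rewrite ?in_cons ?in_nil ?orbF //.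
- by apply/allpairsPdep => -[x [t [_ _]]].
apply/allpairsPdep/andP => [[x [t [xm tl [-> ->]]]] | [/eqP[sl] /andP[am sm]]].
  move: xm tl; rewrite mem_iota IH => xm /andP[tl tm].
  by rewrite /= eqSS tl tm andbT; split=> //; lia.
by exists a, s; split=> //; [rewrite mem_iota; lia | rewrite IH sl eqxx].
Qed.

Lemma uniq_seqs_bounded l m : uniq (seqs_bounded l m).
Proof.
elim: l => [|l IH] //.
apply: (@uniq_flatten_map _ _ _ (fun a => [seq a :: t | t <- seqs_bounded l m])).
- exact: iota_uniq.
- by move=> a; rewrite map_inj_uniq // => t u [].
- by move=> a b z /mapP[t _ ->] /mapP[u _ []].
Qed.

(* Sequences of different lengths are distinct, so the universe has no repeats. *)
Lemma uniq_comp_universe n : uniq (comp_universe n).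
Proof.
apply: uniq_flatten_map => [|l|l k s]; first exact: iota_uniq.
  exact: uniq_seqs_bounded.
by rewrite !mem_seqs_bounded => /andP[/eqP <- _] /andP[/eqP <- _].
Qed.

Lemma size_le_sumn s : all (fun a => 0 < a) s -> size s <= sumn s.
Proof. by elim: s => //= a s IH /andP[a0 /IH]; lia. Qed.

Lemma all_le_sumn s : all (fun a => a <= sumn s) s.
Proof.
elim: s => //= a s IH; rewrite leq_addr /=.
by apply: sub_all IH => x /=; lia.
Qed.

Lemma mem_comp_universe n s : is_composition n s -> s \in comp_universe n.
Proof.
case/andP => pos /eqP sn; apply/flatten_mapP; exists (size s).
  by rewrite mem_iota add0n ltnS -sn size_le_sumn.
by rewrite mem_seqs_bounded eqxx -sn all_le_sumn.
Qed.

Lemma composition0 s : is_composition 0 s = (s == [::]).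
Proof. by case: s => [|[|a] s] //; rewrite /is_composition /= andbF. Qed.

Lemma compositionS n a s :
  is_composition n (a :: s) = [&& 0 < a, a <= n & is_composition (n - a) s].
Proof.
rewrite /is_composition /=; case: (0 < a) (all _ s) => [] []; rewrite ?andbF //=.
by apply/eqP/andP => [sn | [an /eqP sn]]; first split; lia.
Qed.

(* The compositions of n with parts in P, enumerated by first part; k is a
   recursion budget, sufficient as soon as n <= k. *)
Fixpoint enum_compositions (P : pred nat) (k n : nat) : seq (seq nat) :=
  if n is 0 then [:: [::]] else
  if k is k'.+1 then
    [seq a :: t | a <- [seq a <- iota 1 n | P a], t <- enum_compositions P k' (n - a)]
  else [::].

Section FirstPart.
Variable P : pred nat.

Lemma size_enum_compositions k n : size (enum_compositions P k.+1 n.+1) =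
  \sum_(1 <= a < n.+2 | P a) size (enum_compositions P k (n.+1 - a)).
Proof. by rewrite size_allpairs_dep sumnE big_map big_filter. Qed.

Lemma mem_enum_compositions k n s : n <= k ->
  (s \in enum_compositions P k n) = is_composition n s && all P s.
Proof.
elim: k n s => [|k IH] [|n] s // nk; rewrite ?inE ?composition0.
- by case: s.
- by case: s.
case: s => [|a s].
  by apply/allpairsPdep => -[b [t [_ _]]].
rewrite compositionS; apply/allpairsPdep/idP => [[b [t []]] | ].
  rewrite mem_filter mem_iota => /andP[Pb bn]; rewrite IH; last lia.
  by move=> /andP[tc Pt] [-> ->] /=; rewrite tc Pb Pt !andbT; apply/andP; split; lia.
move=> /andP[/and3P[a0 an sc] /andP[Pa Ps]]; exists a, s; split=> //.
  by rewrite mem_filter mem_iota Pa; lia.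
by rewrite IH ?sc ?Ps //; lia.
Qed.

Lemma uniq_enum_compositions k n : uniq (enum_compositions P k n).
Proof.
elim: k n => [|k IH] [|n] //; apply: allpairs_uniq_dep.
- exact/filter_uniq/iota_uniq.
- by move=> a _; exact: IH.
- by move=> [a t] [b u] _ _ /= [eq_ab eq_tu]; subst.
Qed.

Lemma num_compositions_enum k n :
  n <= k -> num_compositions P n = size (enum_compositions P k n).
Proof.
move=> nk; rewrite /num_compositions -size_filter; apply: perm_size.
apply: uniq_perm.
- exact/filter_uniq/uniq_comp_universe.
- exact: uniq_enum_compositions.
move=> s; rewrite mem_filter mem_enum_compositions // andb_idr // => /andP[sc _].
exact: mem_comp_universe.
Qed.

Definition num_nonempty m := \sum_(1 <= a < m.+1 | P a) num_compositions P (m - a).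

Lemma num_nonempty0 : num_nonempty 0 = 0.
Proof. by rewrite /num_nonempty big_geq. Qed.

Lemma num_compositionsE m : num_compositions P m = (m == 0) + num_nonempty m.
Proof.
case: m => [|m]; first by rewrite num_nonempty0 (num_compositions_enum 0).
rewrite (num_compositions_enum m.+1) // size_enum_compositions /num_nonempty add0n.
rewrite big_nat_cond [RHS]big_nat_cond; apply: eq_bigr => a /andP[/andP[a1 _] _].
by rewrite (num_compositions_enum m) //; lia.
Qed.

End FirstPart.

Lemma sum_nat_pred1 m n j (F : nat -> nat) :
  \sum_(m <= a < n | a == j) F a = (m <= j < n) * F j.
Proof.
case: (boolP (m <= j < n)) => jmn.
  rewrite -big_filter filter_pred1_uniq ?iota_uniq ?mem_index_iota //.
  by rewrite big_seq1 mul1n.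
rewrite mul0n big1_seq // => a /andP[/eqP-> jr].
by rewrite -mem_index_iota jr in jmn.
Qed.

Definition two_parts (p q : nat) : pred nat := fun a => (a == p) || (a == q).

Definition arith_parts (p q : nat) : pred nat := fun a => (p <= a) && (q %| a - p).

Section Recurrences.
Variables p q : nat.
Hypotheses (hp : 0 < p) (hq : 0 < q).

Lemma num_nonempty_two_parts m : p != q ->
  num_nonempty (two_parts p q) m =
  (p <= m) * num_compositions (two_parts p q) (m - p) +
  (q <= m) * num_compositions (two_parts p q) (m - q).
Proof.
move=> hpq; rewrite /num_nonempty (bigID (pred1 p)) /=.
rewrite (eq_bigl (pred1 p)) => [|a]; last by rewrite /two_parts /= andb_idl // => ->.
rewrite [X in _ + X](eq_bigl (pred1 q)) => [|a]; last first.
  by rewrite /two_parts /= andb_orl andbN andb_idr // => /eqP->; rewrite eq_sym.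
by rewrite !sum_nat_pred1 !ltnS hp hq.
Qed.

Lemma arith_parts_shift a :
  arith_parts p q a && (a != p) = arith_parts p q (a - q) && (q < a).
Proof.
rewrite /arith_parts; apply/idP/idP.
  case/andP=> /andP[pa dvd_q] ap.
  have qap : q <= a - p by apply: dvdn_leq dvd_q; lia.
  have -> : a - q - p = a - p - q by lia.
  by rewrite dvdn_sub ?dvdnn //; apply/andP; split; lia.
case/andP=> /andP[pa dvd_q] qa.
have -> : a - p = a - q - p + q by lia.
by rewrite dvdn_add ?dvdnn // andbT; apply/andP; split; lia.
Qed.

Lemma num_nonempty_arith_parts m :
  num_nonempty (arith_parts p q) m =
  (p <= m) * num_compositions (arith_parts p q) (m - p) +
  num_nonempty (arith_parts p q) (m - q).
Proof.
rewrite /num_nonempty (bigID (pred1 p)) /=.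
rewrite (eq_bigl (pred1 p)) => [|a]; last first.
  by rewrite /arith_parts /= andb_idl // => /eqP->; rewrite leqnn subnn dvdn0.
rewrite sum_nat_pred1 ltnS hp /=; congr (_ + _).
rewrite (eq_bigl _ _ arith_parts_shift) -big_nat_widenl // -add1n big_addn.
case: (leqP q m) => [qm | mq]; last by rewrite !big_geq //; lia.
rewrite subSn //; apply: eq_big => [a | a _]; first by rewrite addnK.
by rewrite addnC subnDA.
Qed.

End Recurrences.

(* Both sides satisfy the same recursion, so they agree by strong induction. *)
Lemma num_nonempty_arith_two_parts p q m : 0 < p -> 0 < q -> p != q ->
  num_nonempty (arith_parts p q) m = (p <= m) * num_compositions (two_parts p q) (m - p).
Proof.
move=> hp hq hpq; elim/ltn_ind: m => -[|m] IH; first by rewrite num_nonempty0 leqNgt hp.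
rewrite num_nonempty_arith_parts // (IH (m.+1 - q)); last lia.
case: (leqP p m.+1) => [pm | mp]; last by rewrite leqNgt (_ : m.+1 - q < p) //; lia.
rewrite (num_compositionsE (arith_parts p q)) (IH (m.+1 - p)); last lia.
rewrite !mul1n [in RHS](num_compositionsE (two_parts p q)).
rewrite num_nonempty_two_parts // -addnA.
have -> : m.+1 - q - p = m.+1 - p - q by lia.
by have -> : (p <= m.+1 - q) = (q <= m.+1 - p) by lia.
Qed.

Theorem proposition5 (p q : nat) (hp : 0 < p) (hq : 0 < q) (hpq : p != q)
  (n : nat) (hn : p <= n) :
  num_compositions (fun a => (a == p) || (a == q)) (n - p) =
  num_compositions (fun a => (p <= a) && (q %| (a - p))) n.
Proof.
rewrite (num_compositionsE (arith_parts p q)) num_nonempty_arith_two_parts // hn mul1n.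
by have -> : (n == 0) = false by lia.
Qed.
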